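(* For all integers $1\leq k\leq n$, $$\mathrm{ex}(K_{n,n,n,n},kK_3)\geq 4n^2+(k-1)n.$$
   Context: For graphs $G,H$, $\mathrm{ex}(G,H)$ is the maximum number of edges of a subgraph of $G$ containing no copy of $H$. $K_{n,n,n,n}$ is the complete $4$-partite graph with all parts of size $n$, and $kK_3$ denotes $k$ vertex-disjoint triangles. *)

From mathcomp Require Import all_boot.
Set Implicit Arguments. Unset Strict Implicit. Unset Printing Implicit Defensive.

(* Vertices of K_{n,n,n,n}: (part, index) with 4 parts of size n. *)
Definition V (n : nat) : finType := prod 'I_4 'I_n.

(* A (simple-graph) edge is an unordered pair {u,v}, represented as a 2-set. *)
Definition host_edges (n : nat) : {set {set V n}} :=
  [set e | [exists u : V n, exists v : V n, (u.1 != v.1) && (e == [set u; v])]].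

Definition has_kK3 (n k : nat) (E : {set {set V n}}) : bool :=
  [exists f : {ffun ('I_k * 'I_3) -> V n},
     injectiveb f &&
     [forall i : 'I_k, forall j : 'I_3, forall j' : 'I_3,
        (j != j') ==> ([set f (i, j); f (i, j')] \in E)]].

Definition ex_K4n_kK3 (n k : nat) : nat :=
  \max_(E : {set {set V n}} | (E \subset host_edges n) && ~~ has_kK3 k E) #|E|.

(* Split the four parts into a low side (parts 0, 1) and a high side (parts 2, 3),
   keep all 4n^2 edges between the sides, and join k - 1 hub vertices of part 0
   to all of part 1.  Every edge inside a side contains a hub, and every triangle
   has two vertices on the same side, so every triangle contains a hub.  Disjoint
   triangles then contain distinct hubs, hence there are at most k - 1 of them. *)

From mathcomp Require Import all_boot.
From mathcomp Require Import zify.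
Set Implicit Arguments. Unset Strict Implicit.

Lemma card_ord_lt (n m : nat) : m <= n -> #|[set j : 'I_n | j < m]| = m.
Proof.
move=> le_mn.
have -> : [set j : 'I_n | j < m] = widen_ord le_mn @: [set: 'I_m].
  apply/setP => j; rewrite inE; apply/idP/imsetP => [lt_jm | [i _ ->]].
    by exists (Ordinal lt_jm) => //; apply: val_inj.
  by rewrite /= ltn_ord.
rewrite card_imset ?cardsT ?card_ord //.
by move=> i j /(congr1 val) /= /val_inj.
Qed.

Lemma set2_eq (T : finType) (x y a b : T) :
  x != y -> [set x; y] = [set a; b] -> (x = a /\ y = b) \/ (x = b /\ y = a).
Proof.
move=> neq_xy eq_xy_ab.
have x_ab : x \in [set a; b] by rewrite -eq_xy_ab set21.
have y_ab : y \in [set a; b] by rewrite -eq_xy_ab set22.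
move: neq_xy; case/set2P: x_ab => ->; case/set2P: y_ab => ->.
all: rewrite ?eqxx // => _; by [left | right].
Qed.

Definition triangle_transversal (n : nat) (E : {set {set V n}}) (C : {set V n}) :=
  forall x y z : V n, x != y -> x != z -> y != z ->
    [set x; y] \in E -> [set x; z] \in E -> [set y; z] \in E ->
    [|| x \in C, y \in C | z \in C].

(* The vertices of the k triangles lying in C project onto the triangle
   indices 'I_k, and there are at most #|C| of them since f is injective. *)
Lemma has_kK3_le_transversal (n k : nat) (E : {set {set V n}}) (C : {set V n}) :
  triangle_transversal E C -> has_kK3 k E -> k <= #|C|.
Proof.
move=> coverC /existsP[f /andP[/injectiveP inj_f /forallP triE]].
set A := [set p | f p \in C].
have adj i j j' : j != j' -> [set f (i, j); f (i, j')] \in E.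
  by move/forallP: (triE i) => /(_ j) /forallP /(_ j') /implyP.
have neq_f i j j' : j != j' -> f (i, j) != f (i, j').
  by apply: contra => /eqP /inj_f [->].
have onto : fst @: A = [set: 'I_k].
  apply/setP => i; rewrite inE; apply/imsetP.
  pose j0 : 'I_3 := ord0; pose j1 : 'I_3 := Ordinal (isT : 1 < 3).
  pose j2 : 'I_3 := ord_max.
  have := coverC _ _ _ (neq_f i j0 j1 isT) (neq_f i j0 j2 isT) (neq_f i j1 j2 isT)
    (adj i j0 j1 isT) (adj i j0 j2 isT) (adj i j1 j2 isT).
  by case/or3P => inC; [exists (i, j0) | exists (i, j1) | exists (i, j2)];
    rewrite ?inE.
have fA_sub : f @: A \subset C by apply/subsetP => x /imsetP[p]; rewrite inE => Cp ->.
rewrite -[k]card_ord -cardsT -onto.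
apply: leq_trans (leq_imset_card _ _) _.
by rewrite -(card_imset _ inj_f) subset_leq_card.
Qed.

Section Construction.
Variables n k : nat.

Definition low_side : {set V n} := setX [set i : 'I_4 | i < 2] [set: 'I_n].
Definition hubs : {set V n} := setX [set i : 'I_4 | i < 1] [set j : 'I_n | j < k.-1].
Definition part1 : {set V n} := setX [set inord 1] [set: 'I_n].

Definition arcs : {set V n * V n} :=
  setX low_side (~: low_side) :|: setX hubs part1.

Definition construction : {set {set V n}} := [set [set p.1; p.2] | p in arcs].

Lemma arc_part_lt p : p \in arcs -> p.1.1 < p.2.1.
Proof.
case: p => [[a1 a2] [b1 b2]]; rewrite !inE /= !andbT.
case/orP => [/andP[lt_a1 ge_b1] | /andP[/andP[lt_a1 _] /eqP->]].
  by rewrite -leqNgt in ge_b1; lia.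
by rewrite inordK.
Qed.

Lemma arc_neq p : p \in arcs -> p.1 != p.2.
Proof. by move/arc_part_lt; apply: contraTneq => ->; rewrite ltnn. Qed.

Lemma construction_host : construction \subset host_edges n.
Proof.
apply/subsetP => _ /imsetP[p arc_p ->]; rewrite inE.
apply/existsP; exists p.1; apply/existsP; exists p.2.
by rewrite eqxx andbT; apply: contraTneq (arc_part_lt arc_p) => ->; rewrite ltnn.
Qed.

Lemma card_hubs : k.-1 <= n -> #|hubs| = k.-1.
Proof. by move=> le_kn; rewrite cardsX !card_ord_lt // mul1n. Qed.

Lemma card_construction : k.-1 <= n -> #|construction| = 4 * n ^ 2 + k.-1 * n.
Proof.
move=> le_kn.
rewrite card_in_imset; last first.
  move=> [a b] [c d] arc_ab arc_cd /= /(set2_eq (arc_neq arc_ab)) /=.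
  case=> [[-> ->] | [ac bd]] //.
  have := arc_part_lt arc_cd; have := arc_part_lt arc_ab; rewrite /= ac bd.
  by move=> /ltn_trans lt_dc /lt_dc; rewrite ltnn.
have disj : [disjoint setX low_side (~: low_side) & setX hubs part1].
  rewrite -setI_eq0; apply/eqP/setP => [[[a1 a2] [b1 b2]]].
  rewrite !inE /= !andbT.
  by case: eqP => [->|]; rewrite ?inordK ?andbF ?andbT.
have card_low : #|low_side| = 2 * n by rewrite cardsX card_ord_lt // cardsT card_ord.
have card_high : #|~: low_side| = 2 * n.
  by rewrite cardsCs setCK card_low card_prod !card_ord; lia.
have card_part1 : #|part1| = n by rewrite cardsX cards1 cardsT card_ord mul1n.
rewrite /arcs cardsU (disjoint_setI0 disj) cards0 subn0.
rewrite !(cardsX (fT1 := V n) (fT2 := V n)).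
by rewrite card_low card_high card_hubs // card_part1; lia.
Qed.

Lemma construction_edge_hub x y : x != y -> [set x; y] \in construction ->
  (x \in low_side) = (y \in low_side) -> (x \in hubs) || (y \in hubs).
Proof.
move=> neq_xy /imsetP[[p1 p2] arc_p /= /(set2_eq neq_xy) eq_p] same_side.
move: arc_p; rewrite inE => /orP[/setXP[low1 high2] | /setXP[hub1 _]].
  rewrite inE in high2.
  by case: eq_p => -[ex ey]; move: same_side; rewrite ex ey ?low1 (negbTE high2).
by case: eq_p => -[-> ->]; rewrite hub1 ?orbT.
Qed.

(* Of the three vertices of a triangle, two lie on the same side. *)
Lemma construction_transversal : triangle_transversal construction hubs.
Proof.
move=> x y z neq_xy neq_xz neq_yz xy xz yz.
have : [|| (x \in low_side) == (y \in low_side), (x \in low_side) == (z \in low_side)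
         | (y \in low_side) == (z \in low_side)].
  by case: (x \in low_side); case: (y \in low_side); case: (z \in low_side).
case/or3P => /eqP same_side.
- by case/orP: (construction_edge_hub neq_xy xy same_side) => ->; rewrite ?orbT.
- by case/orP: (construction_edge_hub neq_xz xz same_side) => ->; rewrite ?orbT.
- by case/orP: (construction_edge_hub neq_yz yz same_side) => ->; rewrite ?orbT.
Qed.

Lemma construction_kK3_free : 0 < k -> k.-1 <= n -> ~~ has_kK3 k construction.
Proof.
move=> k_gt0 le_kn; apply/negP.
move/(has_kK3_le_transversal construction_transversal).
by rewrite card_hubs //; lia.
Qed.

End Construction.

Theorem mainTheorem5 (n k : nat) (hk1 : 1 <= k) (hkn : k <= n) :
  4 * n ^ 2 + (k - 1) * n <= ex_K4n_kK3 n k.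
Proof.
have le_kn : k.-1 <= n by lia.
rewrite subn1 -(card_construction le_kn).
apply: leq_bigmax_cond.
by rewrite construction_host construction_kK3_free.
Qed.
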